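(* Let $(G_n)$ be a sequence of directed graphs, $G_n$ on vertex set $\{D\}\cup[n]$, in which every participant is reachable from $D$, and let $b_n$ be the maximum out-degree of $G_n$. If $b_n=O((\log n)^{1/2-\epsilon})$ for some $\epsilon>0$, then $\Gamma_{\text{sota}}(G_n)/n\to\infty$ as $n\to\infty$.
   Context: For a directed graph $G$ on $\{D\}\cup[n]$ with dealer $D$ and integer $k\ge 2$, let $\mathcal N(D)$ be the set of out-neighbours of $D$. For a participant $i$ and integer $w\ge k$, let $\ell_w(D\to i)$ be the minimum, over all families of $w$ internally vertex-disjoint directed paths from $D$ to $i$, of the average length (number of edges) of the paths in the family, with $\ell_w(D\to i)=\infty$ if no such family exists. The communication complexity of the state-of-the-art (separate secure transmissions) scheme is $$\Gamma_{\text{sota}}(G)=|\mathcal N(D)|+\sum_{i\notin\mathcal N(D)}\min_{w\ge k}\Big[\frac{w}{w-k+1}\,\ell_w(D\to i)\Big].$$ *)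

From Stdlib Require Import Reals List Arith Lia ClassicalEpsilon.
Import ListNotations.
Open Scope R_scope.

(* A directed graph on the vertex set {0,1,...,n}: vertex 0 is the dealer D,
   vertices 1..n are the participants [n].  Only the restriction of the
   relation to {0..n} is ever used (walks are required to stay in {0..n}). *)
Definition digraph := nat -> nat -> bool.

(* Extended nonnegative values: [None] stands for +infinity. *)
Definition ext := option R.

Definition ext_le (x y : ext) : Prop :=
  match x, y with
  | _, None => True
  | None, Some _ => False
  | Some a, Some b => a <= b
  end.

Definition ext_add (x y : ext) : ext :=
  match x, y with
  | Some a, Some b => Some (a + b)
  | _, _ => None
  end.

Definition ext_scale (c : R) (x : ext) : ext :=
  match x with
  | Some a => Some (c * a)
  | None => None
  end.

(* The minimum of a set of extended reals (chosen by Hilbert's epsilon;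
   it is the genuine minimum whenever one exists). *)
Definition ext_min (P : ext -> Prop) : ext :=
  epsilon (inhabits None) (fun x => P x /\ forall y, P y -> ext_le x y).

Fixpoint is_walk (G : digraph) (n : nat) (p : list nat) : Prop :=
  match p with
  | [] => True
  | [v] => (v <= n)%nat
  | u :: ((v :: _) as q) => (u <= n)%nat /\ G u v = true /\ is_walk G n q
  end.

Definition is_path (G : digraph) (n s t : nat) (p : list nat) : Prop :=
  NoDup p /\ is_walk G n p /\ (exists q, p = s :: q) /\ last p s = t.

Definition path_len (p : list nat) : nat := (length p - 1)%nat.

Definition internal (p : list nat) : list nat := removelast (tl p).

Definition disjoint_family (G : digraph) (n i : nat) (F : list (list nat)) : Prop :=
  NoDup F /\ Forall (is_path G n 0 i) F /\
  forall j j', (j < length F)%nat -> (j' < length F)%nat -> j <> j' ->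
    forall v, In v (internal (nth j F [])) -> ~ In v (internal (nth j' F [])).

Definition avg_len (F : list (list nat)) : R :=
  INR (list_sum (map path_len F)) / INR (length F).

(* ell_w(D -> i): minimal average length over families of w internally
   vertex-disjoint D->i paths; +infinity (None) if no such family exists. *)
Definition ell (G : digraph) (n w i : nat) : ext :=
  ext_min (fun x => x = None \/
    exists F, disjoint_family G n i F /\ length F = w /\ x = Some (avg_len F)).

Definition sota_term (k : nat) (G : digraph) (n i : nat) : ext :=
  ext_min (fun x => exists w, (k <= w)%nat /\
    x = ext_scale (INR w / INR (w - k + 1)) (ell G n w i)).

Definition outnbrs (G : digraph) (n : nat) : list nat :=
  filter (fun u => G 0%nat u) (seq 1 n).

Definition Gamma_sota (k : nat) (G : digraph) (n : nat) : ext :=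
  ext_add (Some (INR (length (outnbrs G n))))
    (fold_right (fun i acc => ext_add (sota_term k G n i) acc) (Some 0)
       (filter (fun i => negb (G 0%nat i)) (seq 1 n))).

(* out-degree of v in G (loops not counted) and maximum out-degree *)
Definition outdeg (G : digraph) (n v : nat) : nat :=
  length (filter (fun u => andb (negb (Nat.eqb u v)) (G v u)) (seq 0 (S n))).

Definition maxdeg (G : digraph) (n : nat) : nat :=
  fold_right Nat.max 0%nat (map (outdeg G n) (seq 0 (S n))).

Definition all_reachable (G : digraph) (n : nat) : Prop :=
  forall i, (1 <= i <= n)%nat -> exists p, is_path G n 0 i p.

From Stdlib Require Import Reals List Arith Lia Lra Wf_nat Classical ClassicalEpsilon.
Import ListNotations.
Open Scope R_scope.

(* Let b be the maximum out-degree of G on {D} U [n].  The vertices at distance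
   at most d from D form a ball with at most (1 + b)^d elements.  A participant
   outside this ball, and not an out-neighbour of D, has only D-paths with more
   than d edges, hence every average path length ell_w is at least d + 1; as the
   redundancy factor w / (w - k + 1) is at least 1, it contributes at least d + 1
   to Gamma_sota.  Since the out-neighbours of D also lie in the ball, at least
   n - 2 (1 + b)^d participants do so, whence
       Gamma_sota(G) >= (d + 1) (n - 2 (1 + b)^d).
   When b = O((log n)^(1/2 - eps)), in particular b <= K log n, the quantity
   4 (1 + b)^d is eventually at most n for every fixed d, so Gamma_sota(G_n) is
   eventually at least (d + 1) n / 2; letting d grow gives the theorem. *)

Lemma ext_le_refl (x : ext) : ext_le x x.
Proof. destruct x; simpl; lra || trivial. Qed.

Lemma ext_le_trans (x y z : ext) : ext_le x y -> ext_le y z -> ext_le x z.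
Proof. destruct x, y, z; simpl; intros; try tauto; lra. Qed.

Lemma ext_le_total (x y : ext) : ext_le x y \/ ext_le y x.
Proof. destruct x as [a|], y as [b|]; simpl; auto. lra. Qed.

Lemma ext_min_in (P : ext -> Prop) :
  (exists x, P x /\ forall y, P y -> ext_le x y) -> P (ext_min P).
Proof.
  intros Hex. exact (proj1 (epsilon_spec (inhabits None) _ Hex)).
Qed.

Lemma ext_finite_min (f : nat -> ext) (m : nat) :
  exists j, (j <= m)%nat /\ forall j', (j' <= m)%nat -> ext_le (f j) (f j').
Proof.
  induction m as [|m [j [Hj Hmin]]].
  - exists 0%nat. split; [lia|]. intros j' Hj'.
    replace j' with 0%nat by lia. apply ext_le_refl.
  - destruct (ext_le_total (f j) (f (S m))) as [Hle|Hle].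
    + exists j. split; [lia|]. intros j' Hj'.
      destruct (Nat.eq_dec j' (S m)) as [->|]; [exact Hle|]. apply Hmin; lia.
    + exists (S m). split; [lia|]. intros j' Hj'.
      destruct (Nat.eq_dec j' (S m)) as [->|]; [apply ext_le_refl|].
      eapply ext_le_trans; [exact Hle|]. apply Hmin; lia.
Qed.

Lemma nat_least (P : nat -> Prop) :
  (exists s, P s) -> exists s, P s /\ forall t, P t -> (s <= t)%nat.
Proof.
  intros Hex.
  destruct (dec_inh_nat_subset_has_unique_least_element P (fun s => classic (P s)) Hex)
    as [s [Hs _]].
  exists s. exact Hs.
Qed.

Definition succs (g : digraph) (n v : nat) : list nat :=
  filter (fun u => andb (negb (Nat.eqb u v)) (g v u)) (seq 0 (S n)).

(* [ball g n d] lists (with repetitions) the vertices at distance at most [d] from D. *)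
Fixpoint ball (g : digraph) (n d : nat) : list nat :=
  match d with
  | O => [0%nat]
  | S d' => ball g n d' ++ flat_map (succs g n) (ball g n d')
  end.

Lemma outdeg_le_maxdeg (g : digraph) (n v : nat) :
  (v <= n)%nat -> (outdeg g n v <= maxdeg g n)%nat.
Proof.
  intros Hv. unfold maxdeg.
  assert (Hin : In (outdeg g n v) (map (outdeg g n) (seq 0 (S n))))
    by (apply in_map, in_seq; lia).
  induction (map (outdeg g n) (seq 0 (S n))) as [|x l IH]; simpl in *; [contradiction|].
  destruct Hin as [->|Hin]; [lia|]. specialize (IH Hin). lia.
Qed.

Lemma ball_bounded (g : digraph) (n d x : nat) : In x (ball g n d) -> (x <= n)%nat.
Proof.
  revert x. induction d as [|d IH]; simpl; intros x Hx.
  - destruct Hx as [<-|[]]. lia.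
  - apply in_app_or in Hx as [Hx|Hx]; auto.
    apply in_flat_map in Hx as [v [_ Hx]].
    apply filter_In in Hx as [Hx _]. apply in_seq in Hx. lia.
Qed.

Lemma ball_size (g : digraph) (n d : nat) :
  (length (ball g n d) <= (1 + maxdeg g n) ^ d)%nat.
Proof.
  induction d as [|d IH]; [simpl; lia|].
  cbn [ball]. rewrite length_app, Nat.pow_succ_r'.
  assert (Hflat : forall l, (forall x, In x l -> (x <= n)%nat) ->
            (length (flat_map (succs g n) l) <= length l * maxdeg g n)%nat).
  { induction l as [|x l IHl]; simpl; intros Hl; [lia|].
    rewrite length_app.
    pose proof (outdeg_le_maxdeg g n x (Hl x (or_introl eq_refl))) as Hx.
    unfold outdeg in Hx. fold (succs g n x) in Hx.
    specialize (IHl (fun y Hy => Hl y (or_intror Hy))). lia. }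
  specialize (Hflat (ball g n d) (ball_bounded g n d)).
  assert (length (ball g n d) * maxdeg g n <= (1 + maxdeg g n) ^ d * maxdeg g n)%nat
    by (apply Nat.mul_le_mono_r; exact IH).
  nia.
Qed.

Lemma ball_mono (g : digraph) (n d d' x : nat) :
  (d <= d')%nat -> In x (ball g n d) -> In x (ball g n d').
Proof. induction 1; intros Hx; simpl; auto using in_or_app. Qed.

Lemma ball_step (g : digraph) (n d u v : nat) :
  In u (ball g n d) -> g u v = true -> v <> u -> (v <= n)%nat -> In v (ball g n (S d)).
Proof.
  intros Hu Huv Hvu Hv. simpl. apply in_or_app. right.
  apply in_flat_map. exists u. split; [exact Hu|].
  apply filter_In. split; [apply in_seq; lia|].
  rewrite Huv. apply Nat.eqb_neq in Hvu. rewrite Hvu. reflexivity.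
Qed.

Lemma walk_head_bounded (g : digraph) (n v : nat) (q : list nat) :
  is_walk g n (v :: q) -> (v <= n)%nat.
Proof. destruct q; simpl; tauto. Qed.

Lemma walk_reaches_ball (g : digraph) (n : nat) (q : list nat) :
  forall u d x, is_walk g n (u :: q) -> NoDup (u :: q) -> In u (ball g n d) ->
  In (last (u :: q) x) (ball g n (d + length q)).
Proof.
  induction q as [|v q IH]; intros u d x Hw Hnd Hu.
  - simpl. rewrite Nat.add_0_r. exact Hu.
  - destruct Hw as [_ [Huv Hw]].
    inversion Hnd as [|? ? Hu_notin Hnd']; subst.
    assert (Hv : In v (ball g n (S d))).
    { apply (ball_step g n d u v Hu Huv).
      - intros ->. apply Hu_notin. left. reflexivity.
      - exact (walk_head_bounded g n v q Hw). }
    replace (d + length (v :: q))%nat with (S d + length q)%nat by (simpl; lia).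
    exact (IH v (S d) x Hw Hnd' Hv).
Qed.

Lemma path_reaches_ball (g : digraph) (n i : nat) (p : list nat) :
  is_path g n 0 i p -> In i (ball g n (path_len p)).
Proof.
  intros [Hnd [Hw [[q ->] Hlast]]]. rewrite <- Hlast.
  replace (path_len (0%nat :: q)) with (0 + length q)%nat
    by (unfold path_len; simpl; lia).
  exact (walk_reaches_ball g n q 0 0 0 Hw Hnd (or_introl eq_refl)).
Qed.

Lemma path_second_vertex (g : digraph) (n i : nat) (p : list nat) :
  is_path g n 0 i p -> i <> 0%nat -> g 0%nat i = false ->
  In (nth 1 p 0%nat) (internal p) /\ (nth 1 p 0%nat <= n)%nat.
Proof.
  intros [_ [Hw [[q ->] Hlast]]] Hi Hg.
  destruct q as [|v [|r s]]; simpl in Hlast.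
  - congruence.
  - subst v. destruct Hw as [_ [Hg' _]]. congruence.
  - destruct Hw as [_ [_ Hw]]. split.
    + left. reflexivity.
    + exact (walk_head_bounded g n v (r :: s) Hw).
Qed.

(* Internally disjoint paths to a non-out-neighbour of D have distinct second
   vertices, so a family of them has at most [n + 1] members. *)
Lemma family_size_bound (g : digraph) (n i : nat) (F : list (list nat)) :
  disjoint_family g n i F -> i <> 0%nat -> g 0%nat i = false ->
  (length F <= S n)%nat.
Proof.
  intros [_ [Hpaths Hdisj]] Hi Hg. rewrite Forall_forall in Hpaths.
  set (second := fun p : list nat => nth 1 p 0%nat).
  assert (Hsecond : forall p, In p F -> In (second p) (internal p) /\ (second p <= n)%nat)
    by (intros p Hp; exact (path_second_vertex g n i p (Hpaths p Hp) Hi Hg)).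
  assert (Hnd : NoDup (map second F)).
  { apply (NoDup_nth (map second F) (second [])). intros j j' Hj Hj' Heq.
    rewrite length_map in Hj, Hj'.
    rewrite (map_nth second F [] j), (map_nth second F [] j') in Heq.
    destruct (Nat.eq_dec j j') as [|Hne]; [assumption|exfalso].
    destruct (Hsecond _ (nth_In F [] Hj)) as [Hin _].
    destruct (Hsecond _ (nth_In F [] Hj')) as [Hin' _].
    rewrite Heq in Hin. exact (Hdisj j j' Hj Hj' Hne _ Hin Hin'). }
  assert (Hincl : incl (map second F) (seq 0 (S n))).
  { intros x Hx. apply in_map_iff in Hx as [p [<- Hp]].
    apply in_seq. pose proof (proj2 (Hsecond p Hp)). lia. }
  pose proof (NoDup_incl_length Hnd Hincl) as Hlen.
  rewrite length_map, length_seq in Hlen. exact Hlen.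
Qed.

Definition ell_candidate (g : digraph) (n w i : nat) (x : ext) : Prop :=
  x = None \/ exists F, disjoint_family g n i F /\ length F = w /\ x = Some (avg_len F).

(* For [w > 0] the minimum defining [ell] exists, so [ell] is one of its
   candidates: a family of [w] paths of least total length has least average. *)
Lemma ell_spec (g : digraph) (n w i : nat) :
  (0 < w)%nat -> ell_candidate g n w i (ell g n w i).
Proof.
  intros Hw. apply (ext_min_in (ell_candidate g n w i)).
  destruct (classic (exists F, disjoint_family g n i F /\ length F = w))
    as [[F0 [HF0 HF0len]]|Hnone].
  - destruct (nat_least (fun s => exists F, disjoint_family g n i F /\ length F = w /\
                                            list_sum (map path_len F) = s))
      as [s [[F [HF [HFlen Hs]]] Hleast]]; [eauto|].
    exists (Some (avg_len F)). split; [right; eauto|].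
    intros y [->|[F' [HF' [HF'len ->]]]]; simpl; [trivial|].
    unfold avg_len, Rdiv. rewrite HFlen, HF'len.
    apply Rmult_le_compat_r.
    + left. apply Rinv_0_lt_compat, lt_0_INR. exact Hw.
    + apply le_INR. rewrite Hs. apply Hleast. eauto.
  - exists None. split; [left; reflexivity|].
    intros y [->|[F [HF [HFlen _]]]]; [exact I|].
    exfalso. apply Hnone. eauto.
Qed.

Lemma ell_lower_bound (g : digraph) (n w i L : nat) :
  (0 < w)%nat -> (forall p, is_path g n 0 i p -> (L <= path_len p)%nat) ->
  ext_le (Some (INR L)) (ell g n w i).
Proof.
  intros Hw HL.
  destruct (ell_spec g n w i Hw) as [->|[F [[_ [Hpaths _]] [HFlen ->]]]]; [exact I|].
  assert (Hsum : (w * L <= list_sum (map path_len F))%nat).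
  { rewrite <- HFlen. clear HFlen.
    induction Hpaths as [|p F Hp _ IH]; simpl; [lia|].
    specialize (HL p Hp). lia. }
  apply le_INR in Hsum. rewrite mult_INR in Hsum.
  assert (Hw' : 0 < INR w) by (apply lt_0_INR; exact Hw).
  unfold ext_le, avg_len. rewrite HFlen.
  apply (Rmult_le_reg_r (INR w)); [exact Hw'|].
  unfold Rdiv. rewrite Rmult_assoc, Rinv_l by lra. lra.
Qed.

Lemma ext_le_scale (c L : R) (e : ext) :
  1 <= c -> 0 <= L -> ext_le (Some L) e -> ext_le (Some L) (ext_scale c e).
Proof. destruct e as [a|]; simpl; [nra|trivial]. Qed.

Lemma redundancy_ge_1 (w k : nat) :
  (1 <= k <= w)%nat -> 1 <= INR w / INR (w - k + 1).
Proof.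
  intros Hkw.
  assert (Hpos : 0 < INR (w - k + 1)) by (apply lt_0_INR; lia).
  assert (Hle : INR (w - k + 1) <= INR w) by (apply le_INR; lia).
  apply (Rmult_le_reg_r (INR (w - k + 1))); [exact Hpos|].
  unfold Rdiv. rewrite Rmult_assoc, Rinv_l by lra. lra.
Qed.

(* The minimum over [w >= k] defining [sota_term] is attained: for [w > n + k]
   there is no family of [w] disjoint paths, so only finitely many [w] matter. *)
Lemma sota_term_attained (k : nat) (g : digraph) (n i : nat) :
  (1 <= k)%nat -> i <> 0%nat -> g 0%nat i = false ->
  exists w, (k <= w)%nat /\
    sota_term k g n i = ext_scale (INR w / INR (w - k + 1)) (ell g n w i).
Proof.
  intros Hk Hi Hg.
  set (term := fun w => ext_scale (INR w / INR (w - k + 1)) (ell g n w i)).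
  assert (Hinf : forall w, (S n < w)%nat -> term w = None).
  { intros w Hw. unfold term.
    destruct (ell_spec g n w i ltac:(lia)) as [->|[F [HF [HFlen _]]]]; [reflexivity|].
    pose proof (family_size_bound g n i F HF Hi Hg). lia. }
  apply (ext_min_in (fun x => exists w, (k <= w)%nat /\ x = term w)).
  destruct (ext_finite_min (fun j => term (k + j)%nat) (S n)) as [j [Hj Hmin]].
  exists (term (k + j)%nat). split; [exists (k + j)%nat; split; [lia|reflexivity]|].
  intros y [w [Hw ->]].
  destruct (le_lt_dec (w - k) (S n)) as [Hsmall|Hlarge].
  - specialize (Hmin (w - k)%nat Hsmall). cbv beta in Hmin.
    replace (k + (w - k))%nat with w in Hmin by lia. exact Hmin.
  - rewrite (Hinf w) by lia. destruct (term (k + j)%nat); exact I.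
Qed.

Lemma sota_lower_bound (k : nat) (g : digraph) (n i L : nat) :
  (1 <= k)%nat -> i <> 0%nat -> g 0%nat i = false ->
  (forall p, is_path g n 0 i p -> (L <= path_len p)%nat) ->
  ext_le (Some (INR L)) (sota_term k g n i).
Proof.
  intros Hk Hi Hg HL.
  destruct (sota_term_attained k g n i Hk Hi Hg) as [w [Hkw ->]].
  apply ext_le_scale.
  - apply redundancy_ge_1. lia.
  - apply pos_INR.
  - apply ell_lower_bound; [lia|exact HL].
Qed.

Lemma ext_sum_count_lb (t : nat -> ext) (sel : nat -> bool) (c : R) (l : list nat) :
  (forall i, In i l -> ext_le (Some 0) (t i)) ->
  (forall i, In i l -> sel i = true -> ext_le (Some c) (t i)) ->
  ext_le (Some (c * INR (length (filter sel l))))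
         (fold_right (fun i acc => ext_add (t i) acc) (Some 0) l).
Proof.
  induction l as [|x l IH]; intros Hnonneg Hsel; simpl; [lra|].
  specialize (IH (fun i Hi => Hnonneg i (or_intror Hi))
                 (fun i Hi => Hsel i (or_intror Hi))).
  pose proof (Hnonneg x (or_introl eq_refl)) as Hx0.
  pose proof (Hsel x (or_introl eq_refl)) as Hxc.
  destruct (sel x); [rewrite length_cons, S_INR|];
    destruct (t x) as [a|], (fold_right _ _ l) as [v|]; simpl in *; trivial.
  - specialize (Hxc eq_refl). lra.
  - lra.
Qed.

Definition non_nbrs (g : digraph) (n : nat) : list nat :=
  filter (fun i => negb (g 0%nat i)) (seq 1 n).

Definition outside (B : list nat) (i : nat) : bool :=
  if in_dec Nat.eq_dec i B then false else true.

(* At least [n - 2 (1 + b)^d] participants are neither out-neighbours of D nor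
   in the ball of radius [d]: both excluded sets have at most [(1 + b)^d]
   members (the out-neighbours lie in the ball of radius 1). *)
Lemma many_far_participants (g : digraph) (n d : nat) :
  (1 <= d)%nat ->
  (n - 2 * (1 + maxdeg g n) ^ d <= length (filter (outside (ball g n d)) (non_nbrs g n)))%nat.
Proof.
  intros Hd.
  pose proof (filter_length (fun i => g 0%nat i) (seq 1 n)) as Hsplit.
  pose proof (filter_length (outside (ball g n d)) (non_nbrs g n)) as Hsplit'.
  rewrite length_seq in Hsplit. fold (non_nbrs g n) (outnbrs g n) in Hsplit.
  assert (Hnear : (length (filter (fun i => negb (outside (ball g n d) i)) (non_nbrs g n))
                   <= length (ball g n d))%nat).
  { apply NoDup_incl_length; [apply NoDup_filter, NoDup_filter, seq_NoDup|].
    intros x Hx. apply filter_In in Hx as [_ Hx].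
    unfold outside in Hx. destruct in_dec; [assumption|discriminate]. }
  assert (Hnbrs : (length (outnbrs g n) <= length (ball g n d))%nat).
  { apply NoDup_incl_length; [apply NoDup_filter, seq_NoDup|].
    intros x Hx. apply filter_In in Hx as [Hx Hg]. apply in_seq in Hx.
    apply (ball_mono g n 1 d); [exact Hd|].
    apply (ball_step g n 0 0 x (or_introl eq_refl) Hg); lia. }
  pose proof (ball_size g n d). lia.
Qed.

Lemma Gamma_lower_bound (k : nat) (g : digraph) (n d : nat) :
  (1 <= k)%nat -> (1 <= d)%nat ->
  ext_le (Some (INR (S d) * INR (n - 2 * (1 + maxdeg g n) ^ d))) (Gamma_sota k g n).
Proof.
  intros Hk Hd.
  assert (Hterms : forall L i, In i (non_nbrs g n) ->
                     (forall p, is_path g n 0 i p -> (L <= path_len p)%nat) ->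
                     ext_le (Some (INR L)) (sota_term k g n i)).
  { intros L i Hi HL. apply filter_In in Hi as [Hi Hg]. apply in_seq in Hi.
    apply sota_lower_bound; [exact Hk|lia|now destruct (g 0%nat i)|exact HL]. }
  assert (Hfar : forall i, In i (non_nbrs g n) -> outside (ball g n d) i = true ->
                   ext_le (Some (INR (S d))) (sota_term k g n i)).
  { intros i Hi Hout. apply (Hterms (S d) i Hi).
    intros p Hp. apply Nat.nlt_ge. intros Hshort.
    unfold outside in Hout. destruct in_dec as [|Hnotin]; [discriminate|].
    apply Hnotin, (ball_mono g n (path_len p) d); [lia|exact (path_reaches_ball g n i p Hp)]. }
  pose proof (ext_sum_count_lb (sota_term k g n) (outside (ball g n d)) (INR (S d))
    (non_nbrs g n) (fun i Hi => Hterms 0%nat i Hi (fun p _ => Nat.le_0_l _)) Hfar) as Hsum.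
  pose proof (le_INR _ _ (many_far_participants g n d Hd)) as Hcount.
  apply (Rmult_le_compat_l (INR (S d))) in Hcount; [|apply pos_INR].
  pose proof (pos_INR (length (outnbrs g n))).
  unfold Gamma_sota. fold (non_nbrs g n).
  destruct (fold_right _ _ (non_nbrs g n)); unfold ext_le, ext_add in *; [lra|exact I].
Qed.

(* [exp] eventually dominates [4 (1 + K t)^D]: writing [y = exp (t / 2D)],
   we have [1 + K t <= (1 + 2DK) y] and [4 (1 + 2DK)^D <= t / 2D <= y^D],
   while [exp t = y^D * y^D]. *)
Lemma exp_dominates_poly (K : R) (D : nat) : 0 < K -> (1 <= D)%nat ->
  exists T, forall t, T <= t -> 4 * (1 + K * t) ^ D <= exp t.
Proof.
  intros HK HD.
  set (m := INR (2 * D)).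
  assert (Hm : 0 < m) by (apply lt_0_INR; lia).
  set (A := 1 + K * m).
  assert (HA : 1 <= A ^ D) by (apply pow_R1_Rle; unfold A; nra).
  exists (m * (4 * A ^ D)). intros t Ht.
  set (y := exp (t / m)).
  assert (Hlin : 1 + t / m <= y) by apply exp_ineq1_le.
  assert (Htm : m * (t / m) = t) by (field; lra).
  assert (Hbig : 4 * A ^ D <= t / m).
  { apply (Rmult_le_reg_l m); [exact Hm|]. lra. }
  assert (Ht0 : 0 <= t) by (rewrite <- Htm; apply Rmult_le_pos; lra).
  assert (Hexp : exp t = y ^ D * y ^ D).
  { rewrite <- pow_add, <- Rpower_pow by apply exp_pos.
    unfold Rpower, y. rewrite ln_exp. f_equal.
    assert (0 < INR D) by (apply lt_0_INR; lia).
    unfold m. rewrite plus_INR, mult_INR. simpl (INR 2). field. lra. }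
  assert (Hbase : 1 + K * t <= A * y).
  { apply Rle_trans with (A * (1 + t / m)); [|apply Rmult_le_compat_l; unfold A; nra].
    unfold A. replace ((1 + K * m) * (1 + t / m)) with (1 + t / m + K * m + K * (m * (t / m)))
      by ring.
    rewrite Htm. assert (0 <= K * m) by nra. lra. }
  assert (Hpow : (1 + K * t) ^ D <= A ^ D * y ^ D).
  { rewrite <- Rpow_mult_distr. apply pow_incr. split; [nra|exact Hbase]. }
  assert (Hy : y <= y ^ D) by (rewrite <- (pow_1 y) at 1; apply Rle_pow; lra || lia).
  assert (Hy0 : 0 <= y ^ D) by (apply pow_le; lra).
  rewrite Hexp. nra.
Qed.

Lemma maxdeg_log_bound (G : nat -> digraph) (eps C : R) (N0 : nat) :
  0 < eps ->
  (forall n, (N0 <= n)%nat -> INR (maxdeg (G n) n) <= C * Rpower (ln (INR n)) (/2 - eps)) ->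
  exists K N, 0 < K /\ forall n, (N <= n)%nat -> INR (maxdeg (G n) n) <= K * ln (INR n).
Proof.
  intros Heps HC. exists (Rabs C + 1), (Nat.max 3 N0). split; [pose proof (Rabs_pos C); lra|].
  intros n Hn.
  assert (Hln : 1 <= ln (INR n)).
  { apply Rnot_lt_le. intros Hlt. rewrite <- (ln_exp 1) in Hlt.
    apply ln_lt_inv in Hlt; [|apply lt_0_INR; lia|apply exp_pos].
    assert (INR 3 <= INR n) by (apply le_INR; lia).
    simpl in *. pose proof exp_le_3. lra. }
  assert (Hpos : 0 < Rpower (ln (INR n)) (/2 - eps)) by apply exp_pos.
  assert (Hle : Rpower (ln (INR n)) (/2 - eps) <= ln (INR n)).
  { rewrite <- (Rpower_1 (ln (INR n))) at 2 by lra. apply Rle_Rpower; lra. }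
  specialize (HC n ltac:(lia)). pose proof (Rle_abs C). pose proof (Rabs_pos C). nra.
Qed.

Lemma balls_eventually_small (G : nat -> digraph) (K : R) (N1 D : nat) :
  0 < K -> (1 <= D)%nat ->
  (forall n, (N1 <= n)%nat -> INR (maxdeg (G n) n) <= K * ln (INR n)) ->
  exists N, forall n, (N <= n)%nat -> (4 * (1 + maxdeg (G n) n) ^ D <= n)%nat.
Proof.
  intros HK HD Hdeg.
  destruct (exp_dominates_poly K D HK HD) as [T HT].
  destruct (INR_unbounded (exp T)) as [N2 HN2].
  exists (Nat.max 1 (Nat.max N1 N2)). intros n Hn.
  assert (Hn0 : 0 < INR n) by (apply lt_0_INR; lia).
  assert (HlnT : T <= ln (INR n)).
  { apply Rnot_lt_le. intros Hlt. rewrite <- (ln_exp T) in Hlt.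
    apply ln_lt_inv in Hlt; [|exact Hn0|apply exp_pos].
    assert (INR N2 <= INR n) by (apply le_INR; lia). lra. }
  apply INR_le. rewrite mult_INR, pow_INR, plus_INR.
  replace (INR 4) with 4 by (simpl; ring). replace (INR 1) with 1 by reflexivity.
  rewrite <- (exp_ln (INR n)) by exact Hn0.
  apply Rle_trans with (4 * (1 + K * ln (INR n)) ^ D); [|exact (HT _ HlnT)].
  apply Rmult_le_compat_l; [lra|]. apply pow_incr.
  pose proof (pos_INR (maxdeg (G n) n)). specialize (Hdeg n ltac:(lia)). lra.
Qed.

Theorem mainTheorem8 (k : nat) (Hk : (2 <= k)%nat) (G : nat -> digraph)
  (Hreach : forall n, all_reachable (G n) n)
  (Hdeg : exists eps, 0 < eps /\ exists C N0, forall n, (N0 <= n)%nat ->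
            INR (maxdeg (G n) n) <= C * Rpower (ln (INR n)) (/2 - eps)) :
  forall M : R, exists N, forall n, (N <= n)%nat ->
    ext_le (Some (M * INR n)) (Gamma_sota k (G n) n).
Proof.
  intros M. destruct Hdeg as [eps [Heps [C [N0 HC]]]].
  destruct (maxdeg_log_bound G eps C N0 Heps HC) as [K [N1 [HK Hlog]]].
  (* a radius [D] with [(D + 1) / 2 >= M] *)
  destruct (INR_unbounded (2 * M)) as [D HD].
  destruct (balls_eventually_small G K N1 (S D) HK ltac:(lia) Hlog) as [N HN].
  exists N. intros n Hn.
  specialize (HN n Hn).
  set (X := ((1 + maxdeg (G n) n) ^ S D)%nat) in *.
  apply ext_le_trans with (Some (INR (S (S D)) * INR (n - 2 * X)));
    [|apply Gamma_lower_bound; lia].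
  (* at least half of the participants lie outside the ball of radius [S D] *)
  assert (Hhalf : INR n <= 2 * INR (n - 2 * X)).
  { rewrite <- (mult_INR 2). apply le_INR. lia. }
  rewrite !S_INR. pose proof (pos_INR n). pose proof (pos_INR D). unfold ext_le. nra.
Qed.
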